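(* On the Euler graph, under the symmetric measure $\mu$, the vertex process satisfies $V_n\to\infty$ and $|n|-V_n\to\infty$ almost surely as $n\to-\infty$.
   Context: The Euler graph has, at each level $n\le0$, vertices labelled $0,\dots,|n|$; vertex $v$ at level $n$ is connected to vertex $v$ at level $n-1$ by $v+1$ edges and to vertex $v+1$ at level $n-1$ by $|n|+1-v$ edges (so $|n|+2$ edges down from $v$). A random path is a sequence of connected edges starting from the single vertex at level 0; $V_n$ is its vertex at level $n$. The symmetric measure $\mu$ is the law of the random path in which, for each $n\le0$, given the path from level $0$ down to level $n$, the next edge (between levels $n$ and $n-1$) is uniformly distributed among the $|n|+2$ edges joining $V_n$ to level $n-1$. Equivalently $(V_n)$ is Markov with $\mathbb P(V_{n-1}=v\mid V_n=v)=\frac{v+1}{|n|+2}$ and $\mathbb P(V_{n-1}=v+1\mid V_n=v)=\frac{|n|+1-v}{|n|+2}$. *)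

From Stdlib Require Import Reals Arith.
Open Scope R_scope.

(* A (candidate) vertex path is w : nat -> nat, with w k = V_{-k}
   (the vertex at level n = -k, so |n| = k). *)

(* Transition probability from vertex a at level -k to vertex b at level -(k+1),
   under the symmetric measure: (a+1)/(k+2) to stay at a, (k+1-a)/(k+2) to go to a+1. *)
Definition trans (k a b : nat) : R :=
  if Nat.eqb b a then INR (a + 1) / INR (k + 2)
  else if Nat.eqb b (a + 1) then (INR (k + 1) - INR a) / INR (k + 2)
  else 0.

Fixpoint prod_trans (f : nat -> nat) (N : nat) : R :=
  match N with
  | O => 1
  | S m => prod_trans f m * trans m (f m) (f (S m))
  end.

Definition cyl_prob (f : nat -> nat) (N : nat) : R :=
  if Nat.eqb (f O) O then prod_trans f N else 0.

Definition in_cyl (f : nat -> nat) (N : nat) (w : nat -> nat) : Prop :=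
  forall k, (k <= N)%nat -> w k = f k.

Fixpoint partial_sum (u : nat -> R) (m : nat) : R :=
  match m with
  | O => u O
  | S p => partial_sum u p + u (S p)
  end.

(* A set of paths is mu-null iff its (Caratheodory) outer measure, built from
   the cylinder premeasure, is zero: for every eps > 0 it is covered by
   countably many cylinders of total mu-mass <= eps. *)
Definition mu_null (A : (nat -> nat) -> Prop) : Prop :=
  forall eps : R, 0 < eps ->
    exists (F : nat -> nat -> nat) (L : nat -> nat),
      (forall w, A w -> exists i, in_cyl (F i) (L i) w) /\
      (forall m, partial_sum (fun i => cyl_prob (F i) (L i)) m <= eps).

Definition mu_as (P : (nat -> nat) -> Prop) : Prop :=
  mu_null (fun w => ~ P w).

(* u k -> +infinity as k -> infinity (k = |n|, n -> -infinity). *)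
Definition tends_to_infty (u : nat -> nat) : Prop :=
  forall M : nat, exists K : nat, forall k, (K <= k)%nat -> (M <= u k)%nat.

From Stdlib Require Import Reals Arith.
From Stdlib Require Import Lra Lia Cantor Classical ClassicalEpsilon.
Open Scope R_scope.

(* Along a fixed path, a transition factor that is eventually at most 1/2 makes the
   cylinder masses decay geometrically, so the path lies in cylinders of arbitrarily
   small mass.  A path of the Euler graph only ever stays put or climbs, so both V and
   k - V are nondecreasing; if one of them is bounded, it is eventually constant, and
   then the path eventually stays at a fixed vertex a (factor (a+1)/(k+2) -> 0) or
   eventually climbs at every step (factor (k+1-a)/(k+2) = (K+1-V_K)/(k+2) -> 0).
   Invalid paths lie in cylinders of mass 0.  The failure set is thus a countable union
   (indexed by finite prefixes) of such thin sets, and a countable union of thin sets is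
   null: cover the n-th one by a single cylinder of mass eps/2^(n+1). *)

Definition thin (A : (nat -> nat) -> Prop) : Prop :=
  forall eps, 0 < eps ->
    exists (f : nat -> nat) (L : nat), (forall w, A w -> in_cyl f L w) /\ cyl_prob f L <= eps.

Lemma mu_null_subset (A B : (nat -> nat) -> Prop) :
  (forall w, B w -> A w) -> mu_null A -> mu_null B.
Proof.
  intros HBA HA eps Heps.
  destruct (HA eps Heps) as [F [L [Hcov Hsum]]].
  exists F, L; split; auto.
Qed.

Lemma partial_sum_le_geometric (u : nat -> R) (eps : R) :
  0 <= eps -> (forall i, u i <= eps * (1/2) ^ S i) -> forall m, partial_sum u m <= eps.
Proof.
  intros Heps Hu m.
  assert (Hpart : forall m, partial_sum u m <= eps * (1 - (1/2) ^ S m)).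
  { induction m0 as [|m0 IH]; simpl partial_sum.
    - specialize (Hu O); simpl in *; lra.
    - specialize (Hu (S m0)); simpl in *; lra. }
  specialize (Hpart m); assert (0 < (1/2) ^ S m) by (apply pow_lt; lra); nra.
Qed.

Lemma mu_null_of_thin_family (A : nat -> (nat -> nat) -> Prop) :
  (forall n, thin (A n)) -> mu_null (fun w => exists n, A n w).
Proof.
  intros Hthin eps Heps.
  assert (Hcover : forall n, { p : (nat -> nat) * nat |
    (forall w, A n w -> in_cyl (fst p) (snd p) w) /\
    cyl_prob (fst p) (snd p) <= eps * (1/2) ^ S n }).
  { intro n; apply constructive_indefinite_description.
    assert (Hpos : 0 < eps * (1/2) ^ S n) by (apply Rmult_lt_0_compat; [lra | apply pow_lt; lra]).
    destruct (Hthin n _ Hpos) as [f [L HfL]].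
    now exists (f, L). }
  exists (fun n => fst (proj1_sig (Hcover n))), (fun n => snd (proj1_sig (Hcover n))).
  split.
  - intros w [n Hn]; exists n; now apply (proj2_sig (Hcover n)).
  - apply partial_sum_le_geometric; [lra|].
    intro n; apply (proj2_sig (Hcover n)).
Qed.

Lemma trans_stay k a : trans k a a = INR (a + 1) / INR (k + 2).
Proof. unfold trans; now rewrite Nat.eqb_refl. Qed.

Lemma trans_climb k a : trans k a (a + 1) = (INR (k + 1) - INR a) / INR (k + 2).
Proof.
  unfold trans.
  replace (Nat.eqb (a + 1) a) with false by (symmetry; apply Nat.eqb_neq; lia).
  now rewrite Nat.eqb_refl.
Qed.

Lemma trans_off_edge k a b : b <> a -> b <> (a + 1)%nat -> trans k a b = 0.
Proof.
  intros Hstay Hclimb; unfold trans.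
  now rewrite (proj2 (Nat.eqb_neq _ _) Hstay), (proj2 (Nat.eqb_neq _ _) Hclimb).
Qed.

Lemma Rabs_div_le_half x y : 0 < y -> 2 * Rabs x <= y -> Rabs (x / y) <= 1/2.
Proof.
  intros Hy Hxy; unfold Rdiv.
  rewrite Rabs_mult, Rabs_inv, (Rabs_pos_eq y) by lra.
  apply (Rmult_le_reg_r y); [lra|].
  replace (Rabs x * / y * y) with (Rabs x) by (field; lra); lra.
Qed.

Lemma prod_trans_geometric (f : nat -> nat) (K : nat) :
  (forall k, (K <= k)%nat -> Rabs (trans k (f k) (f (S k))) <= 1/2) ->
  forall j, Rabs (prod_trans f (K + j)) <= Rabs (prod_trans f K) * (1/2) ^ j.
Proof.
  intros Hhalf j; induction j as [|j IH].
  - rewrite Nat.add_0_r; simpl; lra.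
  - rewrite Nat.add_succ_r; simpl prod_trans; rewrite Rabs_mult; simpl pow.
    replace (Rabs (prod_trans f K) * (1/2 * (1/2) ^ j))
      with (Rabs (prod_trans f K) * (1/2) ^ j * (1/2)) by ring.
    apply Rmult_le_compat; try apply Rabs_pos; auto.
    apply Hhalf; lia.
Qed.

Lemma thin_path (f : nat -> nat) (K : nat) :
  (forall k, (K <= k)%nat -> Rabs (trans k (f k) (f (S k))) <= 1/2) ->
  thin (fun w => forall k, w k = f k).
Proof.
  intros Hhalf eps Heps.
  set (C := Rabs (prod_trans f K)).
  assert (HC : 0 <= C) by apply Rabs_pos.
  destruct (pow_lt_1_zero (1/2)) with (y := eps / (C + 1)) as [N HN].
  { rewrite Rabs_pos_eq; lra. }
  { apply Rdiv_lt_0_compat; lra. }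
  exists f, (K + N)%nat; split; [intros w Hw k _; apply Hw|].
  assert (Hsmall : C * (1/2) ^ N <= eps).
  { specialize (HN N (le_n N)); rewrite Rabs_pos_eq in HN by (apply pow_le; lra).
    apply Rle_trans with (C * (eps / (C + 1))).
    - apply Rmult_le_compat_l; lra.
    - apply (Rmult_le_reg_r (C + 1)); [lra|].
      replace (C * (eps / (C + 1)) * (C + 1)) with (C * eps) by (field; lra); nra. }
  unfold cyl_prob; destruct (Nat.eqb (f O) O); [|lra].
  eapply Rle_trans; [apply Rle_abs|].
  eapply Rle_trans; [apply prod_trans_geometric; exact Hhalf | exact Hsmall].
Qed.

Definition hold_from (g : nat -> nat) (K k : nat) : nat := g (Nat.min k K).

Definition climb_from (g : nat -> nat) (K k : nat) : nat := (g (Nat.min k K) + (k - K))%nat.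

Lemma thin_hold_from g K : thin (fun w => forall k, w k = hold_from g K k).
Proof.
  apply (thin_path _ (K + 2 * (g K + 1))); intros k Hk; unfold hold_from.
  rewrite !Nat.min_r by lia; rewrite trans_stay.
  apply Rabs_div_le_half; [apply lt_0_INR; lia|].
  rewrite Rabs_pos_eq by apply pos_INR.
  change 2 with (INR 2); rewrite <- mult_INR; apply le_INR; lia.
Qed.

Lemma thin_climb_from g K : thin (fun w => forall k, w k = climb_from g K k).
Proof.
  apply (thin_path _ (K + 2 * (K + 1 + g K))); intros k Hk; unfold climb_from.
  rewrite !Nat.min_r by lia.
  replace (g K + (S k - K))%nat with (g K + (k - K) + 1)%nat by lia.
  rewrite trans_climb.
  apply Rabs_div_le_half; [apply lt_0_INR; lia|].
  (* the numerator no longer depends on k *)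
  replace (INR (k + 1) - INR (g K + (k - K))) with (INR (K + 1) - INR (g K))
    by (rewrite !plus_INR, minus_INR by lia; ring).
  assert (Hbound : 2 * (INR (K + 1) + INR (g K)) <= INR (k + 2)).
  { change 2 with (INR 2); rewrite <- plus_INR, <- mult_INR; apply le_INR; lia. }
  pose proof (pos_INR (K + 1)); pose proof (pos_INR (g K)).
  unfold Rabs; destruct Rcase_abs; lra.
Qed.

Lemma thin_null_cylinder g K : thin (fun w => in_cyl g K w /\ cyl_prob g K = 0).
Proof.
  intros eps Heps.
  destruct (Req_dec_T (cyl_prob g K) 0) as [Hnull|Hpos].
  - exists g, K; split; [tauto | lra].
  - exists (fun _ => 1%nat), O; split; [intros w [_ Hnull]; contradiction|].
    unfold cyl_prob; simpl; lra.
Qed.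

Arguments to_nat : simpl never.
Arguments of_nat : simpl never.

Fixpoint prefix_code (g : nat -> nat) (K : nat) : nat :=
  match K with
  | O => g O
  | S K' => to_nat (prefix_code g K', g K)
  end.

Fixpoint prefix_decode (K c k : nat) : nat :=
  match K with
  | O => c
  | S K' => if Nat.eqb k K then snd (of_nat c) else prefix_decode K' (fst (of_nat c)) k
  end.

Lemma prefix_decode_code g K k : (k <= K)%nat -> prefix_decode K (prefix_code g K) k = g k.
Proof.
  induction K as [|K IH]; intros Hk; simpl.
  - now replace k with O by lia.
  - rewrite cancel_of_to; simpl.
    destruct (Nat.eqb_spec k (S K)) as [->|Hne]; [reflexivity|].
    apply IH; lia.
Qed.

Definition exceptional_class (t : nat) (g : nat -> nat) (K : nat) (w : nat -> nat) : Prop :=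
  match t with
  | O => forall k, w k = hold_from g K k
  | 1%nat => forall k, w k = climb_from g K k
  | _ => in_cyl g K w /\ cyl_prob g K = 0
  end.

Definition exceptional (n : nat) : (nat -> nat) -> Prop :=
  let (t, r) := of_nat n in
  let (K, c) := of_nat r in
  exceptional_class t (prefix_decode K c) K.

Lemma thin_exceptional n : thin (exceptional n).
Proof.
  unfold exceptional; destruct (of_nat n) as [t r]; destruct (of_nat r) as [K c].
  destruct t as [|[|t]]; simpl.
  - apply thin_hold_from.
  - apply thin_climb_from.
  - apply thin_null_cylinder.
Qed.

Lemma cyl_prob_prefix g g' K :
  (forall k, (k <= K)%nat -> g k = g' k) -> cyl_prob g K = cyl_prob g' K.
Proof.
  intros Hgg'; unfold cyl_prob; rewrite (Hgg' O) by lia.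
  destruct (Nat.eqb (g' O) O); [|reflexivity].
  induction K as [|K IH]; simpl; [reflexivity|].
  rewrite IH by (intros; apply Hgg'; lia).
  now rewrite (Hgg' K), (Hgg' (S K)) by lia.
Qed.

Lemma exceptional_class_prefix t g g' K w :
  (forall k, (k <= K)%nat -> g k = g' k) ->
  exceptional_class t g K w -> exceptional_class t g' K w.
Proof.
  intros Hgg'; destruct t as [|[|t]]; simpl;
    unfold hold_from, climb_from, in_cyl.
  - intros Hw k; rewrite Hw, Hgg' by lia; reflexivity.
  - intros Hw k; rewrite Hw, Hgg' by lia; reflexivity.
  - intros [Hcyl Hnull]; rewrite <- (cyl_prob_prefix g g' K Hgg'); split; auto.
    intros k Hk; rewrite Hcyl, Hgg'; auto.
Qed.

Lemma exceptional_of_class t K w : exceptional_class t w K w -> exists n, exceptional n w.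
Proof.
  intros Hw; exists (to_nat (t, to_nat (K, prefix_code w K))).
  unfold exceptional; rewrite !cancel_of_to.
  apply (exceptional_class_prefix t w); [|exact Hw].
  intros k Hk; symmetry; now apply prefix_decode_code.
Qed.

Definition euler_path (w : nat -> nat) : Prop :=
  w O = O /\ forall k, w (S k) = w k \/ w (S k) = (w k + 1)%nat.

Lemma cyl_prob_off_euler_path w : ~ euler_path w -> exists K, cyl_prob w K = 0.
Proof.
  intros Hoff; unfold cyl_prob.
  destruct (Nat.eq_dec (w O) O) as [H0|H0].
  - destruct (classic (exists k, w (S k) <> w k /\ w (S k) <> (w k + 1)%nat))
      as [[k [Hstay Hclimb]]|Hnone].
    + exists (S k); rewrite H0; simpl.
      rewrite trans_off_edge by assumption; ring.
    + exfalso; apply Hoff; split; [exact H0|].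
      intro k; apply NNPP; intro Hk; apply Hnone; exists k; tauto.
  - exists O; now rewrite (proj2 (Nat.eqb_neq _ _) H0).
Qed.

Lemma nondecreasing_le (u : nat -> nat) :
  (forall k, (u k <= u (S k))%nat) -> forall k k', (k <= k')%nat -> (u k <= u k')%nat.
Proof.
  intros Hu k k' Hkk'; induction Hkk' as [|k' _ IH]; [lia|].
  specialize (Hu k'); lia.
Qed.

Lemma nondecreasing_bounded_stabilizes (u : nat -> nat) (M : nat) :
  (forall k, (u k <= u (S k))%nat) -> (forall k, (u k <= M)%nat) ->
  exists K, forall k, (K <= k)%nat -> u k = u K.
Proof.
  intros Hu HM.
  (* induction on the room M - u K left below the bound *)
  enough (Hroom : forall d K, (M - u K <= d)%nat -> exists K', forall k, (K' <= k)%nat -> u k = u K')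
    by exact (Hroom M O ltac:(lia)).
  induction d as [|d IH]; intros K Hd;
    destruct (classic (forall k, (K <= k)%nat -> u k = u K)) as [Hconst|Hjump];
    [now exists K| |now exists K|].
  all: apply not_all_ex_not in Hjump; destruct Hjump as [k Hk].
  all: assert (HKk : (K <= k)%nat /\ u k <> u K) by
         (destruct (le_lt_dec K k); [tauto | exfalso; apply Hk; lia]).
  all: pose proof (nondecreasing_le u Hu K k (proj1 HKk)); pose proof (HM k).
  - lia.
  - apply (IH k); lia.
Qed.

Lemma nondecreasing_tends_or_stabilizes (u : nat -> nat) :
  (forall k, (u k <= u (S k))%nat) ->
  tends_to_infty u \/ exists K, forall k, (K <= k)%nat -> u k = u K.
Proof.
  intros Hu; destruct (classic (tends_to_infty u)) as [Htends|Hbounded]; [now left|right].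
  apply not_all_ex_not in Hbounded; destruct Hbounded as [M HM].
  apply (nondecreasing_bounded_stabilizes u M Hu); intro k.
  destruct (le_lt_dec M (u k)) as [Hk|Hk]; [|lia].
  exfalso; apply HM; exists k; intros k' Hk'.
  pose proof (nondecreasing_le u Hu k k' Hk'); lia.
Qed.

Lemma euler_path_le w : euler_path w -> forall k, (w k <= k)%nat.
Proof.
  intros [H0 Hstep] k; induction k as [|k IH]; [lia|].
  destruct (Hstep k); lia.
Qed.

Lemma exceptional_of_not_limit (w : nat -> nat) :
  ~ (tends_to_infty w /\
     (forall M : nat, exists K : nat, forall k, (K <= k)%nat -> (M + w k <= k)%nat)) ->
  exists n, exceptional n w.
Proof.
  intros Hnot.
  destruct (classic (euler_path w)) as [Hpath|Hoff].
  2: { destruct (cyl_prob_off_euler_path w Hoff) as [K HK].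
       apply (exceptional_of_class 2 K); split; [now intros k _|exact HK]. }
  pose proof (euler_path_le w Hpath) as Hle.
  destruct Hpath as [_ Hstep].
  assert (Hmono : forall k, (w k <= w (S k))%nat) by (intro k; destruct (Hstep k); lia).
  destruct (nondecreasing_tends_or_stabilizes w Hmono) as [Hw|[K HK]].
  2: { apply (exceptional_of_class 0 K); intro k; unfold hold_from.
       destruct (le_lt_dec K k); [rewrite Nat.min_r; auto | rewrite Nat.min_l; lia]. }
  destruct (nondecreasing_tends_or_stabilizes (fun k => k - w k)%nat) as [Hgap|[K HK]];
    [intro k; specialize (Hle k); destruct (Hstep k); lia| |].
  - exfalso; apply Hnot; split; [exact Hw|].
    intro M; destruct (Hgap M) as [K HK]; exists K; intros k Hk.
    specialize (HK k Hk); specialize (Hle k); lia.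
  - apply (exceptional_of_class 1 K); intro k; unfold climb_from.
    destruct (le_lt_dec K k) as [HKk|HkK].
    + rewrite Nat.min_r by exact HKk.
      specialize (HK k HKk); pose proof (Hle k); pose proof (Hle K);
        pose proof (nondecreasing_le w Hmono K k HKk).
      lia.
    + rewrite Nat.min_l; lia.
Qed.

Theorem lemma7p1 :
  mu_as (fun w =>
    tends_to_infty w /\
    (forall M : nat, exists K : nat, forall k, (K <= k)%nat -> (M + w k <= k)%nat)).
Proof.
  apply (mu_null_subset (fun w => exists n, exceptional n w)).
  - exact exceptional_of_not_limit.
  - apply mu_null_of_thin_family, thin_exceptional.
Qed.
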